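(* Let $q$ be a prime power with $q\equiv 1\pmod 3$, let $n$ be an integer, and let $\Lambda:=\mathbb{F}_q\setminus\{-1,-\xi,-\xi^2\}$. Then $$\delta^n\sum_{a\in\Lambda}\eta\Big(\frac{\xi+a}{1+a}\Big)+\delta^{2n}\sum_{a\in\Lambda}\eta^2\Big(\frac{\xi+a}{1+a}\Big)=\epsilon_1+\epsilon_2,$$ where $\epsilon_1=-2$ if $q-3n\equiv 1\pmod 9$ and $\epsilon_1=1$ otherwise, and $\epsilon_2=-2$ if $n\equiv 0\pmod 3$ and $\epsilon_2=1$ otherwise.
   Context: Let $q\equiv 1\pmod 3$, let $\xi\in\mathbb{F}_q$ be a fixed cube root of unity with $\xi\neq 1$, and let $\delta\in\mathbb{C}$ be a fixed cube root of unity with $\delta\neq1$. Let $\eta:\mathbb{F}_q\to\mathbb{C}$ be the cubic multiplicative character defined by $\eta(0)=0$ and, for $c\in\mathbb{F}_q^*$ and integers $j$, $\eta(c)=\delta^j$ if and only if $c^{\frac{q-1}{3}}=\xi^j$. We write $\eta^2(c)$ for $\eta(c)^2$. *)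

From HB Require Import structures.
From mathcomp Require Import all_boot all_order all_algebra all_field.
Set Implicit Arguments. Unset Strict Implicit. Unset Printing Implicit Defensive.
Import Order.TTheory GRing.Theory Num.Theory.
Local Open Scope ring_scope.

(* The cubic character eta : F_q -> C attached to (xi, delta):
   eta 0 = 0, and for c <> 0, eta c = delta^j iff c^((q-1)/3) = xi^j.
   Since c^((q-1)/3) is a cube root of unity, it is one of 1, xi, xi^2
   (for j = 0, 1, 2 mod 3), which is what this case distinction unfolds to. *)
Definition cubic_char (F : finFieldType) (xi : F) (delta : algC) (c : F) : algC :=
  if c == 0 then 0
  else let e := c ^+ (#|F|.-1 %/ 3) in
       if e == 1 then 1
       else if e == xi then delta
       else delta ^+ 2.

From HB Require Import structures.
From mathcomp Require Import all_boot all_order all_algebra all_field.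
From mathcomp Require Import zify ring.
Import Order.TTheory GRing.Theory Num.Theory.
Local Open Scope ring_scope.

(* Proof of Lemma 4.2.  Write m = (q-1)/3, so that eta c = delta^i exactly
   when c^m = xi^i.  The argument has three independent ingredients:
   1. Cube roots of unity: a primitive cube root w satisfies 1 + w + w^2 = 0,
      every cube root of unity is a power of w, and w^t + w^(2t) is 2 or -1
      according as 3 divides t or not.
   2. The cubic character: eta is multiplicative, trivial on cubes, and
      nontrivial (a non-cube exists), so the character sums of eta and eta^2
      over F_q vanish.
   3. The Moebius map a |-> (xi + a)/(1 + a), extended by -1 |-> 1, is a
      bijection of F_q sending -1, -xi, -xi^2 to 1, 0, -xi^2; hence a sum
      over Lambda of f((xi+a)/(1+a)) is the full sum of f minus the three
      values f 1, f 0, f (-xi^2).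
   With eta 1 = 1, eta 0 = 0 and eta (-xi^2) = delta^(2m), the left-hand
   side becomes -(delta^n + delta^(2n)) - (delta^N + delta^(2N)) with
   N = n + 2m, and 3 | N is equivalent to q - 3n = 1 (mod 9). *)

Set Implicit Arguments.
Unset Strict Implicit.
Unset Printing Implicit Defensive.

Section CubeRootsOfUnity.

Variables (R : fieldType) (w : R).
Hypotheses (w3 : w ^+ 3 = 1) (w1 : w != 1).

Lemma expr_mod3 (k : nat) : w ^+ k = w ^+ (k %% 3).
Proof. by rewrite {1}(divn_eq k 3) exprD mulnC exprM w3 expr1n mul1r. Qed.

Lemma prim_cube_root_sum : 1 + w + w ^+ 2 = 0.
Proof.
have : (w - 1) * (1 + w + w ^+ 2) = 0.
  by rewrite (_ : _ * _ = w ^+ 3 - 1); [rewrite w3 subrr | ring].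
by move/eqP; rewrite mulf_eq0 subr_eq0 (negbTE w1) => /eqP.
Qed.

Lemma prim_cube_root_neq : [/\ w != 0, w ^+ 2 != 1 & w ^+ 2 != w].
Proof.
have w0 : w != 0 by apply: contra_eq_neq w3 => ->; rewrite expr0n eq_sym oner_neq0.
split=> //; apply: contra_neq w1 => h.
  by rewrite -w3 exprS h mulr1.
by apply: (mulIf w0); rewrite mul1r -expr2.
Qed.

(* X^3 - 1 = (X - 1)(X - w)(X - w^2): every cube root of unity is a power of w. *)
Lemma cube_root_of_unity_cases (x : R) :
  x ^+ 3 = 1 -> exists2 i : nat, (i < 3)%N & x = w ^+ i.
Proof.
move=> x3.
have : (x - 1) * (x - w) * (x - w ^+ 2) = 0.
  rewrite (_ : _ * _ = x ^+ 3 - (1 + w + w ^+ 2) * x ^+ 2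
                        + (w * (1 + w + w ^+ 2)) * x - w ^+ 3); last by ring.
  by rewrite prim_cube_root_sum w3 x3 mulr0 !mul0r subr0 addr0 subrr.
move/eqP; rewrite !mulf_eq0 !subr_eq0 => /orP [/orP [] | ] /eqP ->.
- by exists 0%N.
- by exists 1%N; rewrite ?expr1.
- by exists 2%N.
Qed.

(* The sum w^t + w^(2t) is 2 when 3 | t and 1 + w + w^2 - 1 = -1 otherwise. *)
Lemma prim_cube_root_powers_sum (t : nat) :
  w ^+ t + w ^+ (t * 2) = if (t %% 3 == 0)%N then 2 else -1.
Proof.
have hs := prim_cube_root_sum.
rewrite expr_mod3 [w ^+ (t * 2)]expr_mod3 -modnMml.
have : (t %% 3 < 3)%N by rewrite ltn_pmod.
case: (t %% 3)%N => [|[|[|//]]] _ /=.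
- by rewrite mod0n expr0.
- by rewrite (_ : (1 * 2) %% 3 = 2)%N // expr1 -(subr0 (w + _)) -hs; ring.
- by rewrite (_ : (2 * 2) %% 3 = 1)%N // expr1 -(subr0 (w ^+ 2 + _)) -hs; ring.
Qed.

Lemma prim_cube_root_powers_sum_int (z : int) :
  w ^ z + w ^ (2 * z) = if (3 %| z)%Z then 2 else -1.
Proof.
have [w0 _ _] := prim_cube_root_neq.
have z3 : (0 <= z %% 3)%Z by lia.
have wz : w ^ z = w ^+ `|(z %% 3)%Z|%N.
  rewrite {1}(divz_eq z 3) expfzDr // -exprz_exp exprzAC.
  by rewrite (_ : w ^ 3 = 1) // exp1rz mul1r -{1}(gez0_abs z3).
rewrite mulrC -exprz_exp wz -[_ ^ 2]/(_ ^+ 2) -exprM prim_cube_root_powers_sum.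
by congr (if _ then _ else _); apply/idP/idP => h; lia.
Qed.

End CubeRootsOfUnity.

(* The value of the cubic character on a cube root of unity e = c^((q-1)/3):
   this is the inner case distinction in the definition of cubic_char. *)
Definition cube_root_char (F : fieldType) (xi : F) (delta : algC) (e : F) : algC :=
  if e == 1 then 1 else if e == xi then delta else delta ^+ 2.

Lemma cube_root_char_expr (F : fieldType) (xi : F) (delta : algC) (k : nat) :
  xi ^+ 3 = 1 -> xi != 1 -> delta ^+ 3 = 1 ->
  cube_root_char xi delta (xi ^+ k) = delta ^+ k.
Proof.
move=> xi3 xi1 d3; have [_ xi2 xi21] := prim_cube_root_neq xi3 xi1.
rewrite (expr_mod3 xi3) (expr_mod3 d3).
have : (k %% 3 < 3)%N by rewrite ltn_pmod.
case: (k %% 3)%N => [|[|[|//]]] _; rewrite /cube_root_char.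
- by rewrite !expr0 eqxx.
- by rewrite !expr1 (negbTE xi1) eqxx.
- by rewrite (negbTE xi2) (negbTE xi21).
Qed.

(* A nontrivial multiplicative function on a finite field sums to zero:
   multiplying the variable by g with chi g != 1 rescales the sum by chi g. *)
Lemma mul_char_sum0 (F : finFieldType) (R : idomainType) (chi : F -> R) (g : F) :
  {morph chi : x y / x * y} -> g != 0 -> chi g != 1 -> \sum_(c : F) chi c = 0.
Proof.
move=> chiM g0 g1.
have e : \sum_(c : F) chi c = chi g * \sum_(c : F) chi c.
  rewrite {1}(reindex_inj (mulfI g0)) /= mulr_sumr.
  by apply: eq_bigr => c _; rewrite chiM.
have : (1 - chi g) * \sum_(c : F) chi c = 0 by rewrite mulrBl mul1r -e subrr.
by move/eqP; rewrite mulf_eq0 subr_eq0 eq_sym (negbTE g1) => /eqP.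
Qed.

(* Extending a |-> (xi + a)/(1 + a) by -1 |-> 1 gives a bijection of F whose
   values on -1, -xi, -xi^2 are 1, 0, -xi^2. *)
Lemma moebius_sum (F : finFieldType) (V : zmodType) (xi : F) (f : F -> V) :
  xi ^+ 3 = 1 -> xi != 1 ->
  \sum_(a : F | a \notin [:: -1; -xi; -(xi ^+ 2)]) f ((xi + a) / (1 + a))
  = \sum_(b : F) f b - (f 1 + f 0 + f (- (xi ^+ 2))).
Proof.
move=> xi3 xi1; have [xi0 xi2 xi21] := prim_cube_root_neq xi3 xi1.
pose T a := if a == -1 then 1 else (xi + a) / (1 + a).
pose S b := if b == 1 then -1 else (xi - b) / (b - 1).
have TK : cancel T S.
  move=> a; rewrite /T; have [->|a1] := eqVneq a (-1); first by rewrite /S eqxx.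
  have a1' : 1 + a != 0 by rewrite addr_eq0 eq_sym eqr_oppLR.
  have Ta1 : (xi + a) / (1 + a) != 1.
    apply: contra_neq xi1 => e; apply: (addIr a).
    by rewrite -[LHS](mulfVK a1') e mul1r.
  rewrite /S (negbTE Ta1); field.
  by rewrite a1' (_ : xi + a + -1 * (1 + a) = xi - 1) ?subr_eq0 //; ring.
have n1 : - xi != - 1 by rewrite eqr_opp.
have n2 : - (xi ^+ 2) != - 1 by rewrite eqr_opp.
have n12 : - xi != - (xi ^+ 2) by rewrite eqr_opp eq_sym.
have Tn1 : T (-1) = 1 by rewrite /T eqxx.
have Tn2 : T (-xi) = 0 by rewrite /T (negbTE n1) subrr mul0r.
have Tn3 : T (-(xi ^+ 2)) = -(xi ^+ 2).
  have d : 1 - xi ^+ 2 != 0 by rewrite subr_eq0 eq_sym.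
  rewrite /T (negbTE n2) (_ : xi - xi ^+ 2 = - xi ^+ 2 * (1 - xi ^+ 2)) ?mulfK //.
  have -> : - xi ^+ 2 * (1 - xi ^+ 2) = - xi ^+ 2 + xi ^+ 3 * xi by ring.
  by rewrite xi3 mul1r addrC.
have uniq3 : uniq [:: -1; -xi; -(xi ^+ 2)].
  by rewrite /= !inE negb_or eq_sym n1 eq_sym n2 n12.
rewrite [\sum_(b : F) f b](reindex_inj (can_inj TK)) /=.
rewrite [X in _ = X - _](bigID (mem [:: -1; -xi; -(xi ^+ 2)])) /= -big_uniq //.
rewrite !big_cons big_nil /= Tn1 Tn2 Tn3 addr0 addrA [_ + \sum_(i | _) _]addrC addrK.
apply: eq_bigr => a; rewrite /T; case: eqP => // ->.
by rewrite !inE eqxx.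
Qed.

Section CubicCharacter.

Variables (F : finFieldType) (xi : F) (delta : algC).
Hypotheses (hq : (#|F| %% 3 = 1)%N) (xi3 : xi ^+ 3 = 1) (xi1 : xi != 1)
           (d3 : delta ^+ 3 = 1) (d1 : delta != 1).

Local Notation eta := (cubic_char xi delta).
Local Notation m := (#|F|.-1 %/ 3)%N.

Lemma card_pred_div3 : (3 * m = #|F|.-1)%N.
Proof. by rewrite mulnC divnK //; lia. Qed.

(* Fermat: c^(q-1) = 1 for c != 0, so c^m is a cube root of unity. *)
Lemma expr_card_pred (c : F) : c != 0 -> c ^+ #|F|.-1 = 1.
Proof.
move=> c0; apply: (mulIf c0).
by rewrite mul1r -exprSr prednK ?expf_card //; apply/card_gt0P; exists 0.
Qed.

Lemma cubic_char_expr (c : F) (k : nat) :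
  c != 0 -> c ^+ m = xi ^+ k -> eta c = delta ^+ k.
Proof.
move=> c0 ck; rewrite /cubic_char (negbTE c0) /= -/(cube_root_char xi delta _).
by rewrite ck cube_root_char_expr.
Qed.

Lemma cubic_char_spec (c : F) :
  c != 0 -> exists2 i : nat, (i < 3)%N & c ^+ m = xi ^+ i.
Proof.
move=> c0; apply: cube_root_of_unity_cases => //.
by rewrite -exprM mulnC card_pred_div3 expr_card_pred.
Qed.

Lemma cubic_char0 : eta 0 = 0.
Proof. by rewrite /cubic_char eqxx. Qed.

Lemma cubic_charM : {morph eta : x y / x * y}.
Proof.
move=> x y.
have [->|x0] := eqVneq x 0; first by rewrite mul0r cubic_char0 mul0r.
have [->|y0] := eqVneq y 0; first by rewrite mulr0 cubic_char0 mulr0.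
have [i _ xi_] := cubic_char_spec x0; have [j _ yj] := cubic_char_spec y0.
rewrite (cubic_char_expr x0 xi_) (cubic_char_expr y0 yj) -exprD.
by apply: cubic_char_expr; rewrite ?mulf_neq0 // exprMn xi_ yj exprD.
Qed.

(* Cubes have trivial character, since (c^3)^m = c^(q-1) = 1. *)
Lemma cubic_char_cube (c : F) : c != 0 -> eta (c ^+ 3) = 1.
Proof.
move=> c0; rewrite -(expr0 delta); apply: cubic_char_expr; first exact: expf_neq0.
by rewrite -exprM card_pred_div3 expr_card_pred.
Qed.

(* Not every nonzero element is a cube: the m-th roots of unity number at
   most m < q - 1. *)
Lemma exists_noncube : exists2 g : F, g != 0 & g ^+ m != 1.
Proof.
have m0 : (0 < m)%N.
  have : (0 < #|predC1 (0 : F)%R|)%N.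
    by apply/card_gt0P; exists 1; rewrite !inE oner_eq0.
  by rewrite cardC1; move: hq; set q := #|F|; lia.
apply/exists_inP; apply: contraT; rewrite negb_exists_in => /forall_inP allc.
have hu : all m.-unity_root (enum (predC1 (0 : F))).
  apply/allP => x; rewrite mem_enum !inE => x0.
  by rewrite unity_rootE; move/negPn: (allc x x0).
have := max_unity_roots m0 hu (enum_uniq _).
by rewrite -cardE cardC1; move: m0; set q := #|F|; lia.
Qed.

(* eta and eta^2 are nontrivial characters, so their sums over F vanish. *)
Lemma cubic_char_sums0 :
  \sum_(c : F) eta c = 0 /\ \sum_(c : F) eta c ^+ 2 = 0.
Proof.
have [g g0 gm] := exists_noncube.
have [i i3 gi] := cubic_char_spec g0.
have i0 : i != 0%N by apply: contra_neq gm => i0; rewrite gi i0.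
have [_ d2 _] := prim_cube_root_neq d3 d1.
have etag := cubic_char_expr g0 gi.
split.
  apply: (mul_char_sum0 cubic_charM g0).
  by rewrite etag; move: i3 i0; case: (i) => [|[|[|//]]].
apply: (mul_char_sum0 (chi := fun c => eta c ^+ 2) _ g0).
  by move=> x y /=; rewrite cubic_charM exprMn.
rewrite /= etag -exprM; move: i3 i0; case: (i) => [|[|[|//]]] // _ _.
by rewrite (_ : (2 * 2 = 3 + 1)%N) // exprD d3 mul1r expr1.
Qed.

Lemma cubic_char1 : eta 1 = 1.
Proof. by rewrite -(expr1n _ 3) cubic_char_cube ?oner_eq0. Qed.

Lemma cubic_charN1 : eta (-1) = 1.
Proof.
by rewrite (_ : -1 = (-1) ^+ 3) ?cubic_char_cube ?oppr_eq0 ?oner_eq0 //; ring.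
Qed.

(* The only nontrivial boundary value: eta(-xi^2) = eta(xi^2) = delta^(2m). *)
Lemma cubic_char_N_xi2 : eta (- (xi ^+ 2)) = delta ^+ (2 * m).
Proof.
have [xi0 _ _] := prim_cube_root_neq xi3 xi1.
rewrite -mulN1r cubic_charM cubic_charN1 mul1r.
by apply: cubic_char_expr; rewrite ?expf_neq0 // -!exprM mulnC.
Qed.

End CubicCharacter.

(* The congruence q - 3n = 1 (mod 9) for q = 3m + 1 says 3 | n + 2m. *)
Lemma divisibility_condition (m : nat) (n : int) :
  (3 %| n + (2 * m)%N)%Z = ((3 * m + 1)%N%:Z - 3 * n == 1 %[mod 9])%Z.
Proof. by apply/idP/idP => h; lia. Qed.

Theorem lemma4p2 (F : finFieldType) (xi : F) (delta : algC) (n : int)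
  (hq : (#|F| %% 3 = 1)%N)
  (hxi3 : xi ^+ 3 = 1) (hxi1 : xi != 1)
  (hd3 : delta ^+ 3 = 1) (hd1 : delta != 1) :
  let eta := cubic_char xi delta in
  let eps1 : algC := if (#|F|%:Z - 3 * n == 1 %[mod 9])%Z then -2 else 1 in
  let eps2 : algC := if (3 %| n)%Z then -2 else 1 in
  delta ^ n * (\sum_(a : F | a \notin [:: -1; -xi; -(xi ^+ 2)])
                  eta ((xi + a) / (1 + a)))
  + delta ^ (2 * n) * (\sum_(a : F | a \notin [:: -1; -xi; -(xi ^+ 2)])
                  (eta ((xi + a) / (1 + a))) ^+ 2)
  = eps1 + eps2.
Proof.
move=> eta eps1 eps2; set m := (#|F|.-1 %/ 3)%N.
have [d0 _ _] := prim_cube_root_neq hd3 hd1.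
have [S1 S2] := cubic_char_sums0 hq hxi3 hxi1 hd3 hd1.
rewrite (moebius_sum eta) // (moebius_sum (fun b => eta b ^+ 2)) //=.
rewrite {}/eta S1 S2 cubic_char0 (cubic_char1 hq hxi3 hxi1 hd3 hd1).
rewrite (cubic_char_N_xi2 hq hxi3 hxi1 hd3 hd1) -/m.
pose N := n + (2 * m)%:Z.
have -> : delta ^ n * (0 - (1 + 0 + delta ^+ (2 * m)))
          + delta ^ (2 * n) * (0 - (1 ^+ 2 + 0 ^+ 2 + (delta ^+ (2 * m)) ^+ 2))
          = - (delta ^ n + delta ^ (2 * n)) - (delta ^ N + delta ^ (2 * N)).
  have sqr z : delta ^ (2 * z) = (delta ^ z) ^+ 2 by rewrite mulrC -exprz_exp.
  rewrite !sqr expfzDr // -exprnP.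
  by move: (delta ^ n) (delta ^+ (2 * m)) => x y; ring.
have qm : #|F| = (3 * m + 1)%N by rewrite /m; lia.
rewrite !prim_cube_root_powers_sum_int // {}/N divisibility_condition -qm.
by rewrite /eps1 /eps2; do 2 case: ifP => _; ring.
Qed.
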